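(* Let $K$ be a global function field, $\ell$ a rational prime coprime to the characteristic of $K$, and suppose a primitive $\ell$-th root of unity lies in $K$. Let $x,d,a\in K^*$ with $dx^\ell+d^\ell\neq0$ and $a+a^{-1}\neq0$, and let $H=K\left(\sqrt[\ell]{1+d^{-1}},\sqrt[\ell]{1+(dx^\ell+d^\ell)^{-1}},\sqrt[\ell]{1+(a+a^{-1})d^{-1}}\right)$. Then for every prime $\mathfrak{q}$ of $H$ which is not a pole of $d$ (i.e. $v_\mathfrak{q}(d)\ge0$): (i) $v_\mathfrak{q}(d)\equiv0\pmod\ell$; (ii) $v_\mathfrak{q}(dx^\ell+d^\ell)\equiv0\pmod\ell$; (iii) $v_\mathfrak{q}(a)\equiv0\pmod\ell$.
   Context: For a prime $\mathfrak{q}$ of a global function field, $v_\mathfrak{q}$ denotes the normalized discrete valuation. *)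

From HB Require Import structures.
From mathcomp Require Import all_boot all_order all_algebra all_field.
Set Implicit Arguments. Unset Strict Implicit. Unset Printing Implicit Defensive.
Import Order.TTheory GRing.Theory Num.Theory.
Local Open Scope ring_scope.

(* A prime q of a field L, represented by its normalized discrete valuation
   v_q : L^* -> Z (the value at 0 is irrelevant and never used).
   Normalized = surjective onto Z, guaranteed by an element of value 1.
   For a global function field every nontrivial discrete valuation is trivial
   on the (finite) constant field, so these are exactly the places. *)
Definition normalized_dvaluation (L : fieldType) (v : L -> int) : Prop :=
  [/\ (forall x y : L, x != 0 -> y != 0 -> v (x * y) = v x + v y),
      (forall x y : L, x != 0 -> y != 0 -> x + y != 0 ->
          Num.min (v x) (v y) <= v (x + y))
    & (exists z : L, z != 0 /\ v z = 1)].

From HB Require Import structures.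
From mathcomp Require Import all_boot all_order all_algebra all_field.
From mathcomp Require Import zify.
Import Order.TTheory GRing.Theory Num.Theory.
Local Open Scope ring_scope.

(* If [y ^+ l = 1 + z] with [v z < 0], the ultrametric inequality forces
   [v z = v (y ^+ l) = l * v y].  Applied to [z = d^-1] this gives [l | v d].
   For [e = d x^l + d^l] with [v e < 0], the term [d x^l] must dominate since
   [v (d^l) = l * v d >= 0], so [v e = v d + l * v x].  Finally
   [v (a + a^-1) = - |v a|], and the third radical gives [l | - |v a| - v d]. *)

Section NormalizedValuation.
Context {L : fieldType} {v : L -> int}.
Hypothesis hv : normalized_dvaluation v.

Lemma valM {x y} : x != 0 -> y != 0 -> v (x * y) = v x + v y.
Proof. by case: hv => vM _ _; apply: vM. Qed.

Lemma valD {x y} : x != 0 -> y != 0 -> x + y != 0 ->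
  Num.min (v x) (v y) <= v (x + y).
Proof. by case: hv => _ vD _; apply: vD. Qed.

Lemma val1 : v 1 = 0.
Proof. by have := @valM 1 1 (oner_neq0 L) (oner_neq0 L); rewrite mulr1; lia. Qed.

Lemma valV x : x != 0 -> v x^-1 = - v x.
Proof. by move=> x0; have := valM x0 (invr_neq0 x0); rewrite divff // val1; lia. Qed.

Lemma valN x : x != 0 -> v (- x) = v x.
Proof.
have N1_neq0 : (-1 : L) != 0 by rewrite oppr_eq0 oner_neq0.
have vN1 : v (-1) = 0 by have := valM N1_neq0 N1_neq0; rewrite mulrNN mulr1 val1; lia.
by move=> x0; rewrite -mulN1r valM // vN1 add0r.
Qed.

Lemma valX x n : x != 0 -> v (x ^+ n) = n%:Z * v x.
Proof.
move=> x0; elim: n => [|n IHn]; first by rewrite expr0 val1 mul0r.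
by rewrite exprS valM ?expf_neq0 // IHn; lia.
Qed.

Lemma val_lt_addr_neq0 {x y} : x != 0 -> v x < v y -> x + y != 0.
Proof.
move=> x0 lt_xy; apply/eqP => /(canRL (addKr x)); rewrite addr0 => yE.
by move: lt_xy; rewrite yE valN // ltxx.
Qed.

Lemma valD_lt {x y} : x != 0 -> y != 0 -> v x < v y -> v (x + y) = v x.
Proof.
move=> x0 y0 lt_xy; have xy0 := val_lt_addr_neq0 x0 lt_xy.
have ge := valD x0 y0 xy0.
have Ny0 : - y != 0 by rewrite oppr_eq0.
have := valD xy0 Ny0; rewrite addrK // valN // => /(_ x0) le.
by move: ge le lt_xy; rewrite /Num.min; case: ifP; case: ifP; lia.
Qed.

Section PowerRadicand.
Context {l : nat} {y : L}.

Lemma dvd_val_1Dz {z} : z != 0 -> v z < 0 -> y ^+ l = 1 + z -> (l%:Z %| v z)%Z.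
Proof.
move=> z0 vz_lt0 zE.
have lt_z1 : v z < v 1 by rewrite val1.
have := valD_lt z0 (oner_neq0 L) lt_z1; have := val_lt_addr_neq0 z0 lt_z1.
rewrite addrC -zE; case: l zE => [|n] zE; last first.
  move=> yn0 <-; rewrite valX ?dvdz_mulr //.
  by apply: contraNneq yn0 => ->; rewrite expr0n.
by move: zE; rewrite expr0 -{1}[1]addr0 => /addrI /eqP; rewrite eq_sym (negPf z0).
Qed.

Lemma dvd_val_1DVz {z} : z != 0 -> 0 <= v z -> y ^+ l = 1 + z^-1 -> (l%:Z %| v z)%Z.
Proof.
move=> z0 vz_ge0 zE; have [->|vz_neq0] := eqVneq (v z) 0; first exact: dvdz0.
have := dvd_val_1Dz (invr_neq0 z0) _ zE; rewrite valV // dvdzE abszN; apply; lia.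
Qed.

Context {D : L}.
Hypotheses (D0 : D != 0) (vD_ge0 : 0 <= v D) (dvd_vD : (l%:Z %| v D)%Z).

Lemma dvd_val_DXlDDl {X} : X != 0 -> D * X ^+ l + D ^+ l != 0 ->
  y ^+ l = 1 + (D * X ^+ l + D ^+ l)^-1 -> (l%:Z %| v (D * X ^+ l + D ^+ l))%Z.
Proof.
move=> X0 E0 yE; have [vE_ge0|vE_lt0] := lerP 0 (v (D * X ^+ l + D ^+ l)).
  exact: dvd_val_1DVz yE.
have DXl0 : D * X ^+ l != 0 by rewrite mulf_neq0 ?expf_neq0.
have Dl0 : D ^+ l != 0 by rewrite expf_neq0.
have vDl_ge0 : 0 <= v (D ^+ l) by rewrite valX // mulr_ge0.
have lt_DXl_Dl : v (D * X ^+ l) < v (D ^+ l).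
  have vE_lt_vDl := lt_le_trans vE_lt0 vDl_ge0.
  move: (valD DXl0 Dl0 E0); rewrite ge_min => /orP[le_E|le_E].
    exact: le_lt_trans vE_lt_vDl.
  by have := le_lt_trans le_E vE_lt_vDl; rewrite ltxx.
rewrite valD_lt // valM ?expf_neq0 // valX //.
by rewrite rpredD ?dvdz_mulr.
Qed.

Lemma dvd_val_AAV {A} : A != 0 ->
  y ^+ l = 1 + (A + A^-1) * D^-1 -> (l%:Z %| v A)%Z.
Proof.
wlog vA_lt0 : A / v A < 0 => [wlog_lt0 A0 yE|A0 yE].
  case: (ltrgtP (v A) 0) => [vA_lt0|vA_gt0|->]; [exact: wlog_lt0 | | exact: dvdz0].
  have vAV_lt0 : v A^-1 < 0 by rewrite valV // oppr_lt0.
  have AVE : y ^+ l = 1 + (A^-1 + A^-1^-1) * D^-1 by rewrite invrK [A^-1 + A]addrC.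
  by have := wlog_lt0 A^-1 vAV_lt0 (invr_neq0 A0) AVE; rewrite valV // dvdzE abszN.
have AV0 := invr_neq0 A0.
have lt_A_AV : v A < v A^-1 by rewrite valV //; lia.
have AAV0 := val_lt_addr_neq0 A0 lt_A_AV.
have := dvd_val_1Dz (mulf_neq0 AAV0 (invr_neq0 D0)) _ yE.
rewrite valM ?invr_eq0 // valD_lt // !valV // subr_lt0 (lt_le_trans vA_lt0 vD_ge0).
by move=> /(_ isT) dvd_diff; rewrite -(subrK (v D) (v A)) rpredD.
Qed.

End PowerRadicand.
End NormalizedValuation.

Theorem lemma3p7
  (F : finFieldType) (K : fieldExtType {fraction {poly F}})
  (l : nat) (l_prime : prime l) (l_coprime_char : (l%:R : K) != 0)
  (zeta_in_K : exists zeta : K, l.-primitive_root zeta)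
  (x d a : K) (x_nz : x != 0) (d_nz : d != 0) (a_nz : a != 0)
  (hdx : d * x ^+ l + d ^+ l != 0) (ha : a + a^-1 != 0)
  (H : fieldExtType K) (y1 y2 y3 : H)
  (hy1 : y1 ^+ l = (1 + d^-1)%:A)
  (hy2 : y2 ^+ l = (1 + (d * x ^+ l + d ^+ l)^-1)%:A)
  (hy3 : y3 ^+ l = (1 + (a + a^-1) * d^-1)%:A)
  (hgen : (<<1%VS & [:: y1; y2; y3]>>)%VS = fullv)
  (v : H -> int) (hv : normalized_dvaluation v)
  (hq : 0 <= v d%:A) :
  [/\ (l%:Z %| v d%:A)%Z,
      (l%:Z %| v (d * x ^+ l + d ^+ l)%:A)%Z
    & (l%:Z %| v a%:A)%Z].
Proof.
have alg_neq0 (k : K) : k != 0 -> k%:A != 0 :> H by rewrite -in_algE fmorph_eq0.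
have algE : (d * x ^+ l + d ^+ l)%:A = d%:A * x%:A ^+ l + d%:A ^+ l :> H.
  by rewrite -!in_algE rmorphD rmorphM !rmorphXn.
have {}hy1 : y1 ^+ l = 1 + d%:A^-1 by rewrite hy1 -!in_algE rmorphD rmorph1 fmorphV.
have {}hy2 : y2 ^+ l = 1 + (d%:A * x%:A ^+ l + d%:A ^+ l)^-1.
  by rewrite hy2 -algE -!in_algE rmorphD rmorph1 fmorphV.
have {}hy3 : y3 ^+ l = 1 + (a%:A + a%:A^-1) * d%:A^-1.
  by rewrite hy3 -!in_algE rmorphD rmorph1 rmorphM rmorphD !fmorphV.
have E0 := alg_neq0 _ hdx; rewrite algE in E0 *.
have D0 := alg_neq0 _ d_nz.
have dvd_vD := dvd_val_1DVz hv D0 hq hy1.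
split => //.
- exact: (dvd_val_DXlDDl hv D0 hq dvd_vD (alg_neq0 _ x_nz) E0 hy2).
- exact: (dvd_val_AAV hv D0 hq dvd_vD (alg_neq0 _ a_nz) hy3).
Qed.
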